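(* Let $\alpha>0$, $0<p<1$, $\beta_1,\beta_2,\beta_3>0$, let $V_1,V_2,V_3$ be independent with $V_i\sim EDW(\alpha,p,\beta_i)$, and let $X_1=\max\{V_1,V_3\}$, $X_2=\max\{V_2,V_3\}$. Then $X_1$ and $X_2$ are positive quadrant dependent, i.e. $P(X_1\le x_1,X_2\le x_2)\ge P(X_1\le x_1)P(X_2\le x_2)$ for all $x_1,x_2$.
   Context: The exponentiated discrete Weibull distribution $EDW(\alpha,p,\beta)$ ($\alpha,\beta>0$, $0<p<1$) is the distribution on $\mathbb{N}_0=\{0,1,2,\dots\}$ with cumulative distribution function $F_{EDW}(x;\alpha,p,\beta)=[1-p^{([x]+1)^{\alpha}}]^{\beta}$ for real $x\ge 0$, where $[x]$ is the largest integer $\le x$. *)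

From HB Require Import structures.
From mathcomp Require Import all_boot all_order all_algebra.
From mathcomp Require Import all_classical all_reals all_analysis.
Set Implicit Arguments. Unset Strict Implicit. Unset Printing Implicit Defensive.
Import Order.TTheory GRing.Theory Num.Theory.
Local Open Scope classical_set_scope.
Local Open Scope ring_scope.

Definition edw_cdf (R : realType) (alpha p beta : R) (x : R) : R :=
  if x < 0 then 0
  else (1 - p `^ (((Num.floor x)%:~R + 1) `^ alpha)) `^ beta.

Definition has_EDW d (T : measurableType d) (R : realType)
  (P : probability T R) (V : T -> R) (alpha p beta : R) : Prop :=
  forall x : R, P [set t | V t <= x] = (edw_cdf alpha p beta x)%:E.

(* Mutual independence of three real random variables:
   P(V1 in A1, V2 in A2, V3 in A3) = P(V1 in A1) P(V2 in A2) P(V3 in A3)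
   for all Borel sets A1, A2, A3 (taking some Ai = setT yields the
   sub-family product rules). *)
Definition indep3 d (T : measurableType d) (R : realType)
  (P : probability T R) (V1 V2 V3 : T -> R) : Prop :=
  forall A1 A2 A3 : set R, measurable A1 -> measurable A2 -> measurable A3 ->
    P (V1 @^-1` A1 `&` V2 @^-1` A2 `&` V3 @^-1` A3) =
    (P (V1 @^-1` A1) * P (V2 @^-1` A2) * P (V3 @^-1` A3))%E.

From HB Require Import structures.
From mathcomp Require Import all_boot all_order all_algebra.
From mathcomp Require Import all_classical all_reals all_analysis.
Import Order.TTheory GRing.Theory Num.Theory.
Local Open Scope classical_set_scope.
Local Open Scope ring_scope.

(* By independence,
   P(X1 <= x1) P(X2 <= x2) = P(V1 <= x1) P(V2 <= x2) P(V3 <= x1) P(V3 <= x2)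
   and P(X1 <= x1, X2 <= x2) = P(V1 <= x1) P(V2 <= x2) P(V3 <= min x1 x2);
   since the events {V3 <= x1} and {V3 <= x2} are nested, the product of their
   probabilities is at most the probability of their intersection. *)

Section comparable_events.
Context d (T : measurableType d) (R : realType) (P : probability T R).

Lemma probability_mul_le_setI_subset (A B : set T) :
  measurable B -> A `<=` B -> (P A * P B <= P (A `&` B))%E.
Proof.
move=> mB AB; rewrite setIidl // -[leRHS]mule1.
by apply: lee_wpmul2l; [exact: measure_ge0 | exact: probability_le1].
Qed.

Lemma probability_mul_le_setI (A B : set T) :
  measurable A -> measurable B -> A `<=` B \/ B `<=` A ->
  (P A * P B <= P (A `&` B))%E.
Proof.
move=> mA mB [AB|BA]; first exact: probability_mul_le_setI_subset.
by rewrite muleC setIC; apply: probability_mul_le_setI_subset.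
Qed.

End comparable_events.

Section common_shock.
Context d (T : measurableType d) (R : realType) (P : probability T R).
Variables V1 V2 V3 : {RV P >-> R}.
Hypothesis indepV : indep3 P V1 V2 V3.

Lemma indep3_13 (A1 A3 : set R) : measurable A1 -> measurable A3 ->
  P (V1 @^-1` A1 `&` V3 @^-1` A3) = (P (V1 @^-1` A1) * P (V3 @^-1` A3))%E.
Proof.
move=> mA1 mA3; have := indepV A1 setT A3 mA1 measurableT mA3.
by rewrite !preimage_setT probability_setT mule1 setIT.
Qed.

Lemma indep3_23 (A2 A3 : set R) : measurable A2 -> measurable A3 ->
  P (V2 @^-1` A2 `&` V3 @^-1` A3) = (P (V2 @^-1` A2) * P (V3 @^-1` A3))%E.
Proof.
move=> mA2 mA3; have := indepV setT A2 A3 measurableT mA2 mA3.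
by rewrite !preimage_setT probability_setT mul1e setTI.
Qed.

Lemma preimage_max_le (f g : T -> R) (x : R) :
  [set t | Num.max (f t) (g t) <= x] =
  f @^-1` [set` `]-oo, x]] `&` g @^-1` [set` `]-oo, x]].
Proof. by apply/seteqP; split => t /=; rewrite !in_itv /= ge_max => /andP. Qed.

Lemma indep3_max_pqd (x1 x2 : R) :
  (P [set t | (Num.max (V1 t) (V3 t) <= x1)%R] *
   P [set t | (Num.max (V2 t) (V3 t) <= x2)%R] <=
   P ([set t | (Num.max (V1 t) (V3 t) <= x1)%R] `&`
      [set t | (Num.max (V2 t) (V3 t) <= x2)%R]))%E.
Proof.
have mI (x : R) : measurable [set` `]-oo, x]] by exact: measurable_itv.
rewrite !preimage_max_le indep3_13 // indep3_23 //.
rewrite setIACA -preimage_setI indepV //; last exact: measurableI.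
rewrite muleACA preimage_setI.
apply: lee_wpmul2l.
  by apply: mule_ge0; exact: measure_ge0.
apply: probability_mul_le_setI; try exact: measurable_funPTI.
by have [x12|x21] := leP x1 x2; [left|right] => t /=;
  rewrite !in_itv /= => /le_trans; apply => //; exact: ltW.
Qed.

End common_shock.

Theorem mainTheorem5 (d : measure_display) (T : measurableType d)
  (R : realType) (P : probability T R)
  (alpha p beta1 beta2 beta3 : R)
  (V1 V2 V3 : {RV P >-> R}) :
  0 < alpha -> 0 < p -> p < 1 -> 0 < beta1 -> 0 < beta2 -> 0 < beta3 ->
  indep3 P V1 V2 V3 ->
  has_EDW P V1 alpha p beta1 ->
  has_EDW P V2 alpha p beta2 ->
  has_EDW P V3 alpha p beta3 ->
  forall x1 x2 : R,
    (P [set t | (Num.max (V1 t) (V3 t) <= x1)%R] *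
     P [set t | (Num.max (V2 t) (V3 t) <= x2)%R] <=
     P ([set t | (Num.max (V1 t) (V3 t) <= x1)%R] `&`
        [set t | (Num.max (V2 t) (V3 t) <= x2)%R]))%E.
Proof. by move=> _ _ _ _ _ _ indepV _ _ _; exact: indep3_max_pqd. Qed.
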